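(* Let $i,m\in\mathbb{N}$ and $A=(a_0,\dots,a_i)\in\mathbb{N}^*$. Then \[ \begin{pmatrix} p_i & q_i \\ p_{i-1} & q_{i-1}\end{pmatrix} = \begin{pmatrix} \tilde p_i & \tilde p_{i-1} \\ \tilde q_i & \tilde q_{i-1}\end{pmatrix}. \] Furthermore, $A$ is $m$-palindromic if and only if \[ \begin{pmatrix} p_i & m q_i \\ p_{i-1} & q_{i-1}\end{pmatrix} = \begin{pmatrix} \tilde p_i & \tilde q_i \\ m\tilde p_{i-1} & \tilde q_{i-1}\end{pmatrix}. \] Equivalently, $A$ is $m$-palindromic if and only if $m q_i = p_{i-1}$.
   Context: $\mathbb{N}$ denotes the positive integers and $\mathbb{N}^*$ the set of finite sequences of positive integers. For a finite sequence $(a_0,\dots,a_i)$, $[a_0,\dots,a_i]$ denotes the (finite) continued fraction with partial quotients $a_0,\dots,a_i$. For $A=(a_0,\dots,a_i)$, the convergents are $[a_0,\dots,a_k]=p_k/q_k$ in lowest terms ($0\le k\le i$), with $p_{-1}=1$, $q_{-1}=0$; equivalently $\begin{pmatrix} p_i & p_{i-1}\\ q_i & q_{i-1}\end{pmatrix}=\begin{pmatrix} a_0&1\\1&0\end{pmatrix}\cdots\begin{pmatrix} a_i&1\\1&0\end{pmatrix}$. The reversal of $A$ is $\widetilde A=(a_i,\dots,a_0)$, and its convergents are denoted $\tilde p_k/\tilde q_k$ ($0\le k\le i$). A finite sequence $A$ is called $m$-palindromic (an $m$-palindrome) if $[A]=m[\widetilde A]$. *)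

From mathcomp Require Import all_boot all_order all_algebra.
Set Implicit Arguments. Unset Strict Implicit. Unset Printing Implicit Defensive.
Import Order.TTheory GRing.Theory Num.Theory.
Local Open Scope ring_scope.

Definition mx2 (a b c d : int) : 'M[int]_2 :=
  \matrix_(r < 2, k < 2)
    if r == 0 then (if k == 0 then a else b) else (if k == 0 then c else d).

Definition cf_step (a : nat) : 'M[int]_2 := mx2 a%:Z 1 1 0.

(* convmx (a_0,...,a_i) = [a_0 1;1 0] ... [a_i 1;1 0]
   = [ p_i  p_{i-1} ; q_i  q_{i-1} ]. *)
Definition convmx (A : seq nat) : 'M[int]_2 :=
  foldr (fun a M => cf_step a *m M) 1%:M A.

Definition cf_p  (A : seq nat) : int := convmx A 0 0.
Definition cf_p1 (A : seq nat) : int := convmx A 0 1.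
Definition cf_q  (A : seq nat) : int := convmx A 1 0.
Definition cf_q1 (A : seq nat) : int := convmx A 1 1.

Fixpoint cf_val (A : seq nat) : rat :=
  match A with
  | [::] => 0
  | [:: a] => a%:R
  | a :: s => a%:R + (cf_val s)^-1
  end.

Definition m_palindromic (m : nat) (A : seq nat) : Prop :=
  cf_val A = m%:R * cf_val (rev A).

(* Transposing the product of the symmetric matrices [a_k 1; 1 0] reverses its
   factors, so the convergent matrix of rev A is the transpose of that of A.
   Hence [rev A] = p_i / p_{i-1} while [A] = p_i / q_i, and [A] = m [rev A]
   amounts to p_{i-1} = m q_i once all these integers are known to be positive. *)

From mathcomp Require Import all_boot all_order all_algebra.
From mathcomp Require Import ring.
Import Order.TTheory GRing.Theory Num.Theory.
Local Open Scope ring_scope.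

Lemma mx2E (M : 'M[int]_2) : M = mx2 (M 0 0) (M 0 1) (M 1 0) (M 1 1).
Proof.
apply/matrixP=> r k; rewrite !mxE.
by case: r => [[|[|//]] ?]; case: k => [[|[|//]] ?]; congr (M _ _); apply: val_inj.
Qed.

Lemma mx2_inj a b c d a' b' c' d' :
  mx2 a b c d = mx2 a' b' c' d' -> [/\ a = a', b = b', c = c' & d = d'].
Proof.
move=> E; have entry r k := congr1 (fun M : 'M[int]_2 => M r k) E.
by move: (entry 0 0) (entry 0 1) (entry 1 0) (entry 1 1); rewrite !mxE.
Qed.

Lemma mulmx2 a b c d x y z w :
  mx2 a b c d *m mx2 x y z w =
  mx2 (a * x + b * z) (a * y + b * w) (c * x + d * z) (c * y + d * w).
Proof.
apply/matrixP=> r k; rewrite !mxE !big_ord_recl big_ord0 !mxE addr0.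
by case: r => [[|[|//]] ?]; case: k => [[|[|//]] ?].
Qed.

Lemma cf_step_tr a : (cf_step a)^T = cf_step a.
Proof.
by apply/matrixP=> r k; rewrite !mxE; case: r => [[|[|//]] ?]; case: k => [[|[|//]] ?].
Qed.

Lemma convmx_cat s t : convmx (s ++ t) = convmx s *m convmx t.
Proof. by elim: s => [|a s IH] /=; rewrite ?mul1mx // IH mulmxA. Qed.

Lemma convmx_rev A : convmx (rev A) = (convmx A)^T.
Proof.
elim: A => [|a s IH] /=; first by rewrite trmx1.
by rewrite rev_cons -cats1 convmx_cat IH /= mulmx1 trmx_mul cf_step_tr.
Qed.

Lemma cf_p_rev A : cf_p (rev A) = cf_p A.
Proof. by rewrite /cf_p convmx_rev mxE. Qed.

Lemma cf_q_rev A : cf_q (rev A) = cf_p1 A.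
Proof. by rewrite /cf_q /cf_p1 convmx_rev mxE. Qed.

Lemma cf_p1_rev A : cf_p1 (rev A) = cf_q A.
Proof. by rewrite /cf_q /cf_p1 convmx_rev mxE. Qed.

Lemma cf_q1_rev A : cf_q1 (rev A) = cf_q1 A.
Proof. by rewrite /cf_q1 convmx_rev mxE. Qed.

Lemma cf_p_cons a s : cf_p (a :: s) = a%:Z * cf_p s + cf_q s.
Proof. by rewrite /cf_p /cf_q /= [convmx s]mx2E mulmx2 !mxE /= mul1r. Qed.

Lemma cf_q_cons a s : cf_q (a :: s) = cf_p s.
Proof. by rewrite /cf_p /cf_q /= [convmx s]mx2E mulmx2 !mxE /= mul1r mul0r addr0. Qed.

Lemma convmx_ge0 A r k : 0 <= convmx A r k.
Proof.
elim: A r k => [|a s IH] r k /=; first by rewrite mxE ler0n.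
rewrite [convmx s]mx2E /cf_step mulmx2 mxE.
by do 2!case: ifP => _; rewrite addr_ge0 ?mulr_ge0.
Qed.

Lemma cf_p_gt0 A : all (fun a => 0 < a)%N A -> 0 < cf_p A.
Proof.
elim: A => [|a s IH] /=; first by rewrite /cf_p /= mxE.
by case/andP=> a_gt0 /IH p_gt0; rewrite cf_p_cons ltr_wpDr ?convmx_ge0 ?mulr_gt0 ?ltz_nat.
Qed.

Lemma cf_q_gt0 A : A != [::] -> all (fun a => 0 < a)%N A -> 0 < cf_q A.
Proof. by case: A => // a s _ /andP[_ /cf_p_gt0]; rewrite cf_q_cons. Qed.

Lemma cf_val_convergent A : A != [::] -> all (fun a => 0 < a)%N A ->
  cf_val A = (cf_p A)%:~R / (cf_q A)%:~R.
Proof.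
case: A => // a s _; elim: s a => [|b s IH] a /andP[_ s_gt0].
  by rewrite cf_p_cons cf_q_cons /cf_p /cf_q /= !mxE mulr1 addr0 divr1.
have p_neq0 : (cf_p (b :: s))%:~R != 0 :> rat by rewrite intr_eq0 gt_eqF ?cf_p_gt0.
have -> : cf_val [:: a, b & s] = a%:R + (cf_val (b :: s))^-1 by [].
rewrite IH // invf_div (cf_p_cons a) (cf_q_cons a) rmorphD rmorphM /=.
by rewrite -[(a%:Z)%:~R]/(a%:R : rat); field.
Qed.

Lemma div_eq_scale_div (F : fieldType) (x y z c : F) :
  x != 0 -> y != 0 -> z != 0 -> x / y = c * (x / z) <-> z = c * y.
Proof.
move=> x_neq0 y_neq0 z_neq0; split=> [E | z_def].
  have -> : z = x / y * y * z / x by field; rewrite x_neq0 y_neq0.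
  by rewrite E; field; rewrite x_neq0 z_neq0.
have c_neq0 : c != 0 by apply: contra_neq z_neq0 => c0; rewrite z_def c0 mul0r.
by rewrite z_def; field; rewrite c_neq0 y_neq0.
Qed.

Lemma m_palindromicE m A : A != [::] -> all (fun a => 0 < a)%N A ->
  m_palindromic m A <-> m%:Z * cf_q A = cf_p1 A.
Proof.
move=> A_neq0 A_gt0.
have rA_neq0 : rev A != [::] by rewrite -size_eq0 size_rev size_eq0.
have rA_gt0 : all (fun a => 0 < a)%N (rev A) by rewrite all_rev.
have p1_gt0 : 0 < cf_p1 A by rewrite -cf_q_rev cf_q_gt0.
rewrite /m_palindromic !cf_val_convergent // cf_p_rev cf_q_rev.
rewrite div_eq_scale_div ?intr_eq0 ?gt_eqF ?cf_p_gt0 ?cf_q_gt0 //.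
rewrite -[m%:R]/((m%:Z)%:~R : rat) -intrM.
by split=> [/intr_inj | ->].
Qed.

Theorem lemma3p2 (i m : nat) (A : seq nat) :
  (0 < i)%N -> (0 < m)%N -> size A = i.+1 -> all (fun a => 0 < a)%N A ->
  [/\ mx2 (cf_p A) (cf_q A) (cf_p1 A) (cf_q1 A)
      = mx2 (cf_p (rev A)) (cf_p1 (rev A)) (cf_q (rev A)) (cf_q1 (rev A)),
      m_palindromic m A <->
        mx2 (cf_p A) (m%:Z * cf_q A) (cf_p1 A) (cf_q1 A)
        = mx2 (cf_p (rev A)) (cf_q (rev A)) (m%:Z * cf_p1 (rev A)) (cf_q1 (rev A))
    & m_palindromic m A <-> m%:Z * cf_q A = cf_p1 A].
Proof.
move=> _ _ A_size A_gt0.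
have A_neq0 : A != [::] by rewrite -size_eq0 A_size.
have palE := @m_palindromicE m A A_neq0 A_gt0.
rewrite cf_p_rev cf_q_rev cf_p1_rev cf_q1_rev; split=> //.
by rewrite palE; split=> [-> // | /mx2_inj[]].
Qed.
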